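(* Let $S$ be a quasi-thin scheme on $X$ and $\mathbb F$ a field. Then $S$ is triply regular if and only if there do not exist $R_u,R_v,R_w,R_y,R_z\in S$ with $k_u=k_v=k_w=k_y=k_z=2$ and $p_{uv}^w=p_{wy}^z=|R_{u'}R_z|=1$.
   Context: Let $X$ be a nonempty finite set. A scheme of class $d$ on $X$ is a partition $S=\{R_0,\dots,R_d\}$ of $X\times X$ into nonempty sets such that $R_0=\{(b,b):b\in X\}$; for each $c$ there is $c'$ with $R_{c'}=\{(f,e):(e,f)\in R_c\}$; and for all $i,j,k$ the intersection number $p_{ij}^k=|\{\ell\in X:(m,\ell)\in R_i,(\ell,n)\in R_j\}|$ does not depend on $(m,n)\in R_k$. The valency is $k_a=p_{aa'}^0$; quasi-thin means all $k_a\le 2$; complex product $R_aR_b=\{R_c:p_{ab}^c>0\}$. For $y\in X$, $yR_a=\{z:(y,z)\in R_a\}$; $A_a\in M_X(\mathbb F)$ is the $(0,1)$ adjacency matrix of $R_a$ and $E_a^*(y)$ is the diagonal $(0,1)$-matrix with ones exactly at positions indexed by $yR_a$. $S$ is triply regular if for every $y\in X$ the $\mathbb F$-linear span of all products $E_i^*(y)A_jE_\ell^*(y)$ ($R_i,R_j,R_\ell\in S$) is a unital $\mathbb F$-subalgebra of $M_X(\mathbb F)$. *)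

From mathcomp Require Import all_boot all_order all_algebra.
Set Implicit Arguments. Unset Strict Implicit. Unset Printing Implicit Defensive.
Import GRing.Theory.
Local Open Scope ring_scope.

(* A relational structure on X with classes R_0,...,R_d is encoded by the
   function r : X -> X -> 'I_d.+1, where (x,y) \in R_c  <->  r x y = c. *)
Section Scheme.
Variables (X : finType) (d : nat) (r : X -> X -> 'I_d.+1).

Definition pcount (i j : 'I_d.+1) (m n : X) : nat :=
  #|[set l | (r m l == i) && (r l n == j)]|.

Definition is_scheme : Prop :=
  [/\ (forall c : 'I_d.+1, exists x y, r x y = c),
      (forall x y, (r x y == ord0) = (x == y)),
      (forall c : 'I_d.+1, exists c' : 'I_d.+1, forall x y, r x y = c <-> r y x = c') &
      (forall i j k : 'I_d.+1, forall m n m' n', r m n = k -> r m' n' = k ->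
          pcount i j m n = pcount i j m' n')].

Definition pnum (i j k : 'I_d.+1) : nat :=
  if [pick mn : X * X | r mn.1 mn.2 == k] is Some mn
  then pcount i j mn.1 mn.2 else 0.

Definition conv (c : 'I_d.+1) : 'I_d.+1 :=
  odflt c [pick c' : 'I_d.+1 | [forall x, forall y, (r x y == c) == (r y x == c')]].

Definition valency (a : 'I_d.+1) : nat := pnum a (conv a) ord0.

Definition quasi_thin : Prop := forall a : 'I_d.+1, (valency a <= 2)%N.

Definition cplx_prod (a b : 'I_d.+1) : {set 'I_d.+1} :=
  [set c | (0 < pnum a b c)%N].

(* Matrices in M_X(F), rows/columns indexed via enum_val : 'I_#|X| -> X. *)
Variable F : fieldType.

Definition adj (j : 'I_d.+1) : 'M[F]_#|X| :=
  \matrix_(a, b) ((r (enum_val a) (enum_val b) == j) : nat)%:R.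

Definition dual_idem (y : X) (i : 'I_d.+1) : 'M[F]_#|X| :=
  \matrix_(a, b) (((a == b) && (r y (enum_val a) == i)) : nat)%:R.

(* the F-linear span of all E_i^*(y) A_j E_l^*(y), as a row space of mxvec's *)
Definition terwilliger_span (y : X) : 'M[F]_(#|X| ^ 2) :=
  (\sum_(t : 'I_d.+1 * 'I_d.+1 * 'I_d.+1)
     <<mxvec (dual_idem y t.1.1 *m adj t.1.2 *m dual_idem y t.2)>>)%MS.

Definition triply_regular : Prop :=
  forall y : X,
    (mxvec (1%:M : 'M[F]_#|X|) <= terwilliger_span y)%MS /\
    (forall M N : 'M[F]_#|X|,
        (mxvec M <= terwilliger_span y)%MS ->
        (mxvec N <= terwilliger_span y)%MS ->
        (mxvec (M *m N) <= terwilliger_span y)%MS).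

End Scheme.

(* The span of the E*_i(y) A_j E*_l(y) is exactly the space of
   matrices that are constant on the classes of pairs (p, q) with a given triple
   (r y p, r p q, r y q); it always contains 1, and it is closed under products as soon
   as the triple intersection numbers #{e | r y e = l, r p e = j, r e q = m} depend only
   on that triple.  In a quasi-thin scheme all fibres x R_c have at most two points.  If
   two pairs of the same type had different triple numbers, the numbers would be 1 and
   0, and the relations r y a, r a e, r y e, r e b, r y b around the point e counted
   for the first pair form the forbidden configuration.  Conversely, the forbidden
   configuration yields two pairs of the same type with triple numbers 1 and 0, which
   remain distinct in every characteristic, so E*_u A_v E*_w E*_w A_y E*_z leaves the
   span. *)

From mathcomp Require Import all_boot all_order all_algebra.
Set Implicit Arguments. Unset Strict Implicit. Unset Printing Implicit Defensive.

Section Scheme.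

Variables (X : finType) (d : nat) (r : X -> X -> 'I_d.+1).
Hypothesis r_scheme : is_scheme r.

Lemma convP c x y : (r x y == c) = (r y x == conv r c).
Proof.
case: r_scheme => _ _ transpose _; rewrite /conv; case: pickP => [c' /forallP|none].
  by move=> /(_ x) /forallP /(_ y) /eqP.
have [c' c'P] := transpose c; move: (none c') => /negP[].
by apply/forallP => x'; apply/forallP => y'; apply/eqP; apply/idP/idP => /eqP/c'P/eqP.
Qed.

Lemma pcount_eq i j m n m' n' :
  r m n = r m' n' -> pcount r i j m n = pcount r i j m' n'.
Proof. by case: r_scheme => _ _ _ reg E; apply: (reg i j (r m n)). Qed.

Lemma pnumE i j m n : pnum r i j (r m n) = pcount r i j m n.
Proof.
rewrite /pnum; case: pickP => [[m0 n0] /eqP /= E | /(_ (m, n))]; last by rewrite eqxx.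
exact: pcount_eq.
Qed.

Lemma r_diag x : r x x = ord0.
Proof. by case: r_scheme => _ diag _ _; apply/eqP; rewrite diag. Qed.

Lemma valencyE c x : valency r c = #|[set e | r x e == c]|.
Proof.
rewrite /valency -(r_diag x) pnumE; apply: eq_card => e.
by rewrite !inE -convP andbb.
Qed.

Lemma card_in_valency c x : #|[set e | r e x == c]| = valency r c.
Proof.
have in_const x' : #|[set e | r e x' == c]| = #|[set e | r e x == c]|.
  have in_pcount z : #|[set e | r e z == c]| = pcount r (conv r c) c z z.
    by apply: eq_card => e; rewrite !inE -convP andbb.
  by rewrite !in_pcount; apply: pcount_eq; rewrite !r_diag.
have double_count :
    \sum_(x' : X) #|[set e | r x' e == c]| = \sum_(e : X) #|[set x' | r x' e == c]|.
  under eq_bigr do rewrite -sum1dep_card big_mkcond /=.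
  rewrite exchange_big /=; apply: eq_bigr => e _.
  by rewrite -sum1dep_card [RHS]big_mkcond.
move: double_count; under eq_bigr do rewrite -valencyE.
rewrite (eq_bigr _ (fun e _ => in_const e)) !sum_nat_const => /eqP.
by rewrite eqn_pmul2l => [/eqP | ]; last by apply/card_gt0P; exists x.
Qed.

Hypothesis r_qthin : quasi_thin r.

Lemma card_out_le2 x c : #|[set e | r x e == c]| <= 2.
Proof. by rewrite -valencyE. Qed.

Lemma valency_eq2 x c u v : r x u = c -> r x v = c -> u != v -> valency r c = 2.
Proof.
move=> xu xv uv; apply/eqP; rewrite eqn_leq r_qthin (valencyE _ x).
by apply/card_gt1P; exists u, v; rewrite !inE xu xv !eqxx.
Qed.

Lemma valency_eq2_in x c u v : r u x = c -> r v x = c -> u != v -> valency r c = 2.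
Proof.
move=> ux vx uv; apply/eqP; rewrite eqn_leq r_qthin -(card_in_valency _ x).
by apply/card_gt1P; exists u, v; rewrite !inE ux vx !eqxx.
Qed.

Lemma valency2_other c x e : valency r c = 2 -> exists2 e', r x e' = c & e' != e.
Proof.
rewrite (valencyE _ x) => card2.
have /card_gt1P[u [v [+ + uv]]] : 1 < #|[set e | r x e == c]| by rewrite card2.
rewrite !inE => /eqP xu /eqP xv.
by have [ue | ] := eqVneq u e; [exists v; rewrite // -ue eq_sym | exists u].
Qed.

Lemma out_other_eq x c u v w :
  r x u = c -> r x v = c -> r x w = c -> u != v -> w != u -> w = v.
Proof.
move=> xu xv xw uv wu; apply/eqP; apply: contraTT (card_out_le2 x c) => wv.
by rewrite -ltnNge; apply/card_gt2P; exists u, v, w; rewrite !inE xu xv xw (eq_sym v) wv.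
Qed.

Lemma pcount_le1 i j m n l : r m l = i -> r l n != j -> pcount r i j m n <= 1.
Proof.
move=> ml ln; rewrite -ltnS; apply: leq_trans (card_out_le2 m i).
apply: proper_card; rewrite properE; apply/andP; split.
  by apply/subsetP => p; rewrite !inE => /andP[].
by apply/subsetPn; exists l; rewrite !inE ml eqxx // (negbTE ln).
Qed.

Lemma pcount_gt0 i j m n l : r m l = i -> r l n = j -> 0 < pcount r i j m n.
Proof. by move=> ml ln; apply/card_gt0P; exists l; rewrite inE ml ln !eqxx. Qed.

Lemma pcount_gt1_full i j m n l : 1 < pcount r i j m n -> r m l = i -> r l n = j.
Proof.
move=> big ml; apply/eqP; move: big; apply: contraLR => ln.
by rewrite -leqNgt (pcount_le1 ml ln).
Qed.

Lemma separated_pcount x a e e' j :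
  r x e = r x e' -> r a e = j -> r a e' != j ->
  pcount r (r x a) j x e = 1 /\ valency r (r x a) = 2.
Proof.
move=> ee' ae ae'.
have De : pcount r (r x a) j x e = 1.
  apply/eqP; rewrite eqn_leq (pcount_gt0 erefl ae) andbT.
  by rewrite (pcount_eq _ _ ee') (pcount_le1 erefl ae').
split=> //.
have /card_gt0P[p] : 0 < pcount r (r x a) j x e' by rewrite -(pcount_eq _ _ ee') De.
rewrite inE => /andP[/eqP xp /eqP pe'].
by apply: (valency_eq2 xp erefl); apply: contraNneq ae' => <-; rewrite pe'.
Qed.

Lemma separated_partner x a a' e e' j :
  r x a = r x a' -> a != a' -> r x e = r x e' -> r a e = j -> r a e' != j ->
  r a' e' = j.
Proof.
move=> xa aa' ee' ae ae'; have [De _] := separated_pcount ee' ae ae'.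
have /card_gt0P[p] : 0 < pcount r (r x a) j x e' by rewrite -(pcount_eq _ _ ee') De.
rewrite inE => /andP[/eqP xp /eqP pe'].
suff <- : p = a' by [].
by apply: (out_other_eq erefl (esym xa) xp aa'); apply: contraNneq ae' => <-; rewrite pe'.
Qed.

Lemma cplx_prod_pnum_gt1 i k n :
  1 < pnum r i k n -> cplx_prod r (conv r i) n = [set k].
Proof.
have [x [q <-]] : exists x q, r x q = n by case: r_scheme => cover _ _ _; apply: cover.
rewrite pnumE => big; apply/setP => c; rewrite !inE; apply/idP/eqP => [|->].
  have [p [q' <-]] : exists p q', r p q' = c by case: r_scheme => cover _ _ _; apply: cover.
  rewrite pnumE => /card_gt0P[x']; rewrite inE -convP => /andP[/eqP x'p /eqP x'q'].
  by apply: pcount_gt1_full x'p; rewrite (pcount_eq _ _ x'q').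
have /card_gt0P[p] : 0 < pcount r i k x q by apply: ltnW.
rewrite inE => /andP[/eqP xp /eqP <-]; rewrite pnumE.
by apply: (pcount_gt0 (l := x)) => //; apply/eqP; rewrite -convP xp.
Qed.

Definition triple_count x l j m a b : nat :=
  #|[set e | [&& r x e == l, r a e == j & r e b == m]]|.

Definition triple_counts_regular x : Prop :=
  forall a b a' b', r x a = r x a' -> r a b = r a' b' -> r x b = r x b' ->
  forall l j m, triple_count x l j m a b = triple_count x l j m a' b'.

Definition forbidden_config : Prop :=
  exists u v w y z : 'I_d.+1,
    valency r u = 2 /\ valency r v = 2 /\ valency r w = 2 /\
    valency r y = 2 /\ valency r z = 2 /\
    pnum r u v w = 1 /\ pnum r w y z = 1 /\
    #|cplx_prod r (conv r u) z| = 1.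

Lemma triple_count_le_out x l j m a b :
  triple_count x l j m a b <= pcount r l (conv r j) x a.
Proof.
by apply: subset_leq_card; apply/subsetP => e; rewrite !inE -convP => /and3P[-> ->].
Qed.

Lemma triple_count_out_full x l j m a b :
  1 < pcount r l (conv r j) x a -> triple_count x l j m a b = pcount r l m x b.
Proof.
move=> big; apply: eq_card => e; rewrite !inE.
have [xe /= | //] := eqVneq (r x e) l.
by rewrite convP (pcount_gt1_full big xe) eqxx.
Qed.

Lemma triple_count_in_full x l j m a b :
  1 < pcount r l m x b -> triple_count x l j m a b = pcount r l (conv r j) x a.
Proof.
move=> big; apply: eq_card => e; rewrite !inE -convP.
have [xe /= | //] := eqVneq (r x e) l.
by rewrite (pcount_gt1_full big xe) eqxx andbT.
Qed.

Lemma triple_count_gap_pcount_le1 x a b a' b' l j m :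
  r x a = r x a' -> r x b = r x b' ->
  triple_count x l j m a' b' < triple_count x l j m a b ->
  pcount r l (conv r j) x a <= 1 /\ pcount r l m x b <= 1.
Proof.
move=> xa xb gap; split; rewrite leqNgt; apply/negP => big; move: gap.
  by rewrite !triple_count_out_full -?(pcount_eq _ _ xa) // (pcount_eq _ _ xb) ltnn.
by rewrite !triple_count_in_full -?(pcount_eq _ _ xb) // (pcount_eq _ _ xa) ltnn.
Qed.

Lemma triple_count0_valency x l j m a b :
  triple_count x l j m a b = 0 -> 0 < pcount r j m a b ->
  0 < pcount r l (conv r j) x a -> 0 < pcount r l m x b ->
  [/\ valency r l = 2, valency r j = 2 & valency r m = 2].
Proof.
move=> /eqP; rewrite cards_eq0 => /eqP N0.
have notN e : r x e = l -> r a e = j -> r e b = m -> False.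
  by move=> xe ae eb; have := in_set0 e; rewrite -N0 inE xe ae eb !eqxx.
move=> /card_gt0P[f]; rewrite inE => /andP[/eqP af /eqP fb].
move=> /card_gt0P[e1]; rewrite inE -convP => /andP[/eqP xe1 /eqP ae1].
move=> /card_gt0P[e2]; rewrite inE => /andP[/eqP xe2 /eqP e2b].
split.
- by apply: (valency_eq2 xe1 xe2); apply/eqP => e12; apply: (notN e1); rewrite // e12.
- by apply: (valency_eq2 ae1 af); apply/eqP => e1f; apply: (notN e1); rewrite // e1f.
- by apply: (valency_eq2_in e2b fb); apply/eqP => e2f; apply: (notN e2); rewrite // e2f.
Qed.

Section Separation.

Variables (x a b a' b' e e' : X).
Hypotheses (xa : r x a = r x a') (ab : r a b = r a' b') (xb : r x b = r x b').
Hypotheses (ab_neq : (a, b) != (a', b')) (ee' : r x e = r x e').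
Hypotheses (ae' : r a e' != r a e) (e'b : r e' b != r e b).
Hypothesis e'_notin : ~~ ((r a' e' == r a e) && (r e' b' == r e b)).

Let be : r b e = conv r (r e b).
Proof. by apply/eqP; rewrite -convP. Qed.

Let be' : r b e' != conv r (r e b).
Proof. by rewrite -convP. Qed.

Lemma separation_pcount_gt1 : 1 < pcount r (r x a) (r a b) x b.
Proof.
have [a_a' | aa'] := eqVneq a a'.
  have bb' : b != b' by apply: contraNneq ab_neq => <-; rewrite a_a'.
  have [_ vi] := separated_pcount ee' erefl ae'.
  have [p xp pa] := valency2_other x a vi.
  have big : 1 < pcount r (r x b) (conv r (r a b)) x a.
    apply/card_gt1P; exists b, b'.
    by rewrite !inE -!convP xb ab a_a' !eqxx.
  have pb : r p b = r a b.
    apply/eqP; rewrite convP; apply/eqP.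
    by apply: (pcount_gt1_full _ (erefl (r x b))); rewrite (pcount_eq _ _ xp).
  by apply/card_gt1P; exists a, p; rewrite !inE xp pb eq_sym pa !eqxx.
have [b_b' | bb'] := eqVneq b b'.
  by apply/card_gt1P; exists a, a'; rewrite !inE xa ab b_b' aa' !eqxx.
(* Here x R_(r x a) = {a, a'} and x R_(r x b) = {b, b'}, which puts e' in the count of (a', b'). *)
case/negP: e'_notin; apply/andP; split; apply/eqP.
  exact: separated_partner xa aa' ee' erefl ae'.
by apply/eqP; rewrite convP; apply/eqP; apply: separated_partner xb bb' ee' be be'.
Qed.

Lemma forbidden_config_of_separation :
  valency r (r a e) = 2 -> valency r (r e b) = 2 -> forbidden_config.
Proof.
move=> vj vm.
have [pij vi] := separated_pcount ee' erefl ae'.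
have [_ vn] := separated_pcount ee' be be'.
have vl : valency r (r x e) = 2.
  by apply: (valency_eq2 erefl (esym ee')); apply: contraNneq ae' => <-.
have plmn : pnum r (r x e) (r e b) (r x b) = 1.
  apply/eqP; rewrite pnumE eqn_leq (pcount_gt0 erefl erefl) andbT.
  exact: pcount_le1 (esym ee') e'b.
exists (r x a), (r a e), (r x e), (r e b), (r x b); do !split => //.
  by rewrite pnumE.
by rewrite (@cplx_prod_pnum_gt1 _ (r a b)) ?cards1 // pnumE separation_pcount_gt1.
Qed.

End Separation.

Lemma forbidden_config_of_triple_count_gap x a b a' b' l j m :
  r x a = r x a' -> r a b = r a' b' -> r x b = r x b' ->
  triple_count x l j m a' b' < triple_count x l j m a b -> forbidden_config.
Proof.
move=> xa ab xb gap; have [Ale1 Ble1] := triple_count_gap_pcount_le1 xa xb gap.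
have N0 : triple_count x l j m a' b' = 0.
  apply/eqP; rewrite -leqn0 -ltnS.
  exact: leq_trans gap (leq_trans (triple_count_le_out _ _ _ _ _ _) Ale1).
have /card_gt0P[e] : 0 < triple_count x l j m a b by apply: leq_ltn_trans gap.
rewrite inE => /and3P[/eqP xe /eqP ae /eqP eb]; subst l j m.
have [vl vj vm] :
    [/\ valency r (r x e) = 2, valency r (r a e) = 2 & valency r (r e b) = 2].
  apply: triple_count0_valency N0 _ _ _.
  - by rewrite -(pcount_eq _ _ ab) (pcount_gt0 erefl erefl).
  - by rewrite -(pcount_eq _ _ xa) (pcount_gt0 erefl) //; apply/eqP; rewrite -convP.
  - by rewrite -(pcount_eq _ _ xb) (pcount_gt0 erefl erefl).
have [e' xe' e'e] := valency2_other x e vl.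
have ae' : r a e' != r a e.
  apply: contra e'e => /eqP ae'; apply/eqP.
  by have /(_ e e') := card_le1_eqP Ale1; apply; rewrite inE -convP ?ae' ?xe' !eqxx.
have e'b : r e' b != r e b.
  apply: contra e'e => /eqP e'b; apply/eqP.
  by have /(_ e e') := card_le1_eqP Ble1; apply; rewrite inE ?e'b ?xe' !eqxx.
apply: (forbidden_config_of_separation xa ab xb _ (esym xe') ae' e'b) => //.
  by apply: contraTneq gap => -[<- <-]; rewrite ltnn.
apply/negP => /andP[/eqP a'e' /eqP e'b'].
by have := card0_eq N0 e'; rewrite inE xe' a'e' e'b' !eqxx.
Qed.

Lemma triple_counts_regular_of_no_config x :
  ~ forbidden_config -> triple_counts_regular x.
Proof.
move=> noconf a b a' b' xa ab xb l j m.
have [gap | gap | //] := ltngtP (triple_count x l j m a' b') (triple_count x l j m a b).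
  by case: noconf; apply: forbidden_config_of_triple_count_gap gap.
by case: noconf; apply: forbidden_config_of_triple_count_gap (esym xa) (esym ab) (esym xb) gap.
Qed.

Lemma triple_count_gap_of_forbidden_config :
  forbidden_config -> exists x a a' b l j m,
    [/\ r x a = r x a', r a b = r a' b,
        triple_count x l j m a b = 1 & triple_count x l j m a' b = 0].
Proof.
case=> u [v [w [y [z [vu [_ [_ [_ [_ [puvw [pwyz cplx1]]]]]]]]]]].
have [x [b xb]] : exists x b, r x b = z by case: r_scheme => cover _ _ _; apply: cover.
have [e0 E0] : exists e0, [set e | r x e == w & r e b == y] = [set e0].
  by apply/cards1P; rewrite -pwyz -xb pnumE.
have /[!inE] /andP[/eqP xe0 /eqP e0b] : e0 \in [set e | r x e == w & r e b == y].
  by rewrite E0 set11.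
have [a Ea] : exists a, [set p | r x p == u & r p e0 == v] = [set a].
  by apply/cards1P; rewrite -puvw -xe0 pnumE.
have /[!inE] /andP[/eqP xa /eqP ae0] : a \in [set p | r x p == u & r p e0 == v].
  by rewrite Ea set11.
have [a' xa' a'a] := valency2_other x a vu.
have in_cplx p : r x p = u -> r p b \in cplx_prod r (conv r u) z.
  by move=> xp; rewrite inE pnumE (pcount_gt0 (l := x)) //; apply/eqP; rewrite -convP xp.
have ab : r a b = r a' b.
  by have /(_ _ _ (in_cplx a xa) (in_cplx a' xa')) := card_le1_eqP (eq_leq cplx1).
have on_e0 e : r x e = w -> r e b = y -> e = e0.
  by move=> xe eb; apply/set1P; rewrite -E0 inE xe eb !eqxx.
exists x, a, a', b, w, v, y; split=> //; first by rewrite xa xa'.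
  rewrite -(cards1 e0); apply: eq_card => e; rewrite !inE.
  apply/and3P/eqP => [[/eqP xe _ /eqP eb] | ->]; first exact: on_e0.
  by rewrite xe0 ae0 e0b !eqxx.
apply: eq_card0 => e; rewrite !inE; apply/and3P => -[/eqP xe /eqP a'e /eqP eb].
have e_e0 := on_e0 e xe eb; subst e.
have /set1P a'_a : a' \in [set a] by rewrite -Ea inE xa' a'e !eqxx.
by rewrite a'_a eqxx in a'a.
Qed.

End Scheme.

Import GRing.Theory.
Local Open Scope ring_scope.

Section TerwilligerAlgebra.

Variables (X : finType) (d : nat) (r : X -> X -> 'I_d.+1) (F : fieldType) (y : X).

Local Notation gen i j l := (dual_idem r F y i *m adj r F j *m dual_idem r F y l).
Local Notation span := (terwilliger_span r F y).

Definition triple_type (p q : 'I_#|X|) : 'I_d.+1 * 'I_d.+1 * 'I_d.+1 :=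
  (r y (enum_val p), r (enum_val p) (enum_val q), r y (enum_val q)).

Definition type_constant (M : 'M[F]_#|X|) : Prop :=
  forall p q p' q', triple_type p q = triple_type p' q' -> M p q = M p' q'.

Lemma dual_idem_diag i :
  dual_idem r F y i = diag_mx (\row_p ((r y (enum_val p) == i) : nat)%:R).
Proof.
apply/matrixP => p q; rewrite !mxE.
by have [-> | ] := eqVneq p q; rewrite ?mulr1n ?mulr0n.
Qed.

Lemma gen_entry i j l p q : gen i j l p q = (triple_type p q == (i, j, l) : nat)%:R.
Proof.
rewrite !dual_idem_diag mul_diag_mx mul_mx_diag !mxE -!natrM !mulnb.
by rewrite /triple_type !xpair_eqE.
Qed.

Lemma gen_type_constant i j l : type_constant (gen i j l).
Proof. by move=> p q p' q' tpq; rewrite !gen_entry tpq. Qed.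

Lemma span_type_constant M : (mxvec M <= span)%MS -> type_constant M.
Proof.
move=> M_span p q p' q' tpq.
pose P : 'cV[F]_(#|X| * #|X|) :=
  delta_mx (mxvec_index p q) 0 - delta_mx (mxvec_index p' q') 0.
have mxvecP (N : 'M[F]_#|X|) : (mxvec N *m P) 0 0 = N p q - N p' q'.
  by rewrite mulmxBr -!colE !mxE !mxvecE.
have span_ker : (span <= kermx P)%MS.
  apply/sumsmx_subP => t _; rewrite genmxE sub_kermx; apply/eqP/matrixP => i0 j0.
  by rewrite !ord1 mxvecP (gen_type_constant _ _ _ tpq) subrr mxE.
have := submx_trans M_span span_ker; rewrite sub_kermx => /eqP/matrixP/(_ 0 0).
by rewrite mxvecP mxE => /eqP; rewrite subr_eq0 => /eqP.
Qed.

Definition type_coef (M : 'M[F]_#|X|) t : F :=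
  if [pick pq | triple_type pq.1 pq.2 == t] is Some pq then M pq.1 pq.2 else 0.

Lemma type_coefE M p q : type_constant M -> M p q = type_coef M (triple_type p q).
Proof.
rewrite /type_coef => M_const; case: pickP => [[p' q'] /eqP /= tpq | /(_ (p, q))].
  exact: M_const.
by rewrite eqxx.
Qed.

Lemma type_constant_span M : type_constant M -> (mxvec M <= span)%MS.
Proof.
move=> M_const.
have -> : M = \sum_t type_coef M t *: gen t.1.1 t.1.2 t.2.
  apply/matrixP => p q; rewrite summxE (bigD1 (triple_type p q)) //= big1.
    by rewrite mxE gen_entry eqxx mulr1 addr0 -type_coefE.
  move=> t /negbTE tpq; rewrite mxE gen_entry -!surjective_pairing.
  by rewrite eq_sym tpq mulr0.
rewrite linear_sum; apply: summx_sub => t _; rewrite linearZ scalemx_sub //.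
by apply: (sumsmx_sup t) => //; rewrite genmxE.
Qed.

Lemma gen_in_span i j l : (mxvec (gen i j l) <= span)%MS.
Proof. by apply: (sumsmx_sup (i, j, l)) => //; rewrite genmxE. Qed.

Lemma terwilliger_spanP M : reflect (type_constant M) (mxvec M <= span)%MS.
Proof. by apply: (iffP idP); [apply: span_type_constant | apply: type_constant_span]. Qed.

Lemma mulmx_type_constant_entry M N p q :
  type_constant M -> type_constant N ->
  (M *m N) p q = \sum_t (type_coef M (r y (enum_val p), t.1.2, t.1.1) *
                         type_coef N (t.1.1, t.2, r y (enum_val q)))
                 *+ triple_count r y t.1.1 t.1.2 t.2 (enum_val p) (enum_val q).
Proof.
move=> M_const N_const; rewrite mxE.
under eq_bigr do rewrite (type_coefE _ _ M_const) (type_coefE _ _ N_const).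
rewrite -(big_enum_val (A := X)
  (fun e => type_coef M (r y (enum_val p), r (enum_val p) e, r y e) *
            type_coef N (r y e, r e (enum_val q), r y (enum_val q)))) /=.
rewrite (partition_big (fun e => (r y e, r (enum_val p) e, r e (enum_val q))) xpredT) //.
apply: eq_bigr => [[[l j] m]] _.
rewrite (eq_bigr (fun _ => type_coef M (r y (enum_val p), j, l) *
                            type_coef N (l, m, r y (enum_val q)))); last first.
  by move=> e /= /eqP[-> -> ->].
rewrite sumr_const; congr (_ *+ _); apply: eq_card => e.
by rewrite unfold_in inE /= xpair_eqE andbA.
Qed.

Lemma type_constant_mul M N :
  triple_counts_regular r y -> type_constant M -> type_constant N ->
  type_constant (M *m N).
Proof.
move=> tcr M_const N_const p q p' q' [yp pq yq].
rewrite !mulmx_type_constant_entry // yp yq; apply: eq_bigr => t _.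
by rewrite (tcr _ _ _ _ yp pq yq).
Qed.

Lemma one_type_constant : is_scheme r -> type_constant 1%:M.
Proof.
case=> _ diag _ _ p q p' q' [_ pq _]; rewrite !mxE.
by rewrite -(inj_eq enum_val_inj) -[p' == q'](inj_eq enum_val_inj) -!diag pq.
Qed.

Lemma gen_mul_gen_entry i j l m n p q :
  r y (enum_val p) = i -> r y (enum_val q) = n ->
  (gen i j l *m gen l m n) p q = (triple_count r y l j m (enum_val p) (enum_val q))%:R.
Proof.
move=> yp yq; rewrite mxE.
under eq_bigr do rewrite !gen_entry -natrM mulnb /triple_type !xpair_eqE yp yq !eqxx /=.
rewrite -natr_sum; congr _%:R.
rewrite /triple_count -sum1dep_card [RHS]big_mkcond [RHS]big_enum_val /=.
apply: eq_bigr => k _.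
by case: (r y (enum_val k) == l); rewrite /= ?andbT // andbC.
Qed.

Lemma span_mul_closed_triple_count a b a' b' l j m :
  (forall M N, (mxvec M <= span)%MS -> (mxvec N <= span)%MS ->
               (mxvec (M *m N) <= span)%MS) ->
  r y a = r y a' -> r a b = r a' b' -> r y b = r y b' ->
  (triple_count r y l j m a b)%:R = (triple_count r y l j m a' b')%:R :> F.
Proof.
move=> closed ya ab yb.
have /terwilliger_spanP prod_const :=
  closed _ _ (gen_in_span (r y a) j l) (gen_in_span l m (r y b)).
have := prod_const (enum_rank a) (enum_rank b) (enum_rank a') (enum_rank b').
rewrite /triple_type !(@gen_mul_gen_entry (r y a) _ _ _ (r y b)) ?enum_rankK //.
by apply; rewrite ya ab yb.
Qed.

Lemma triple_counts_regular_span_algebra :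
  is_scheme r -> triple_counts_regular r y ->
  (mxvec (1%:M : 'M[F]_#|X|) <= span)%MS /\
  (forall M N, (mxvec M <= span)%MS -> (mxvec N <= span)%MS ->
               (mxvec (M *m N) <= span)%MS).
Proof.
move=> r_scheme tcr; split; first by apply/terwilliger_spanP; apply: one_type_constant.
move=> M N /terwilliger_spanP M_const /terwilliger_spanP N_const.
by apply/terwilliger_spanP; apply: type_constant_mul.
Qed.

End TerwilligerAlgebra.

Theorem corollary4p12 (X : finType) (d : nat) (r : X -> X -> 'I_d.+1)
    (F : fieldType) :
  is_scheme r -> quasi_thin r ->
  (triply_regular r F <->
   ~ (exists u v w y z : 'I_d.+1,
        valency r u = 2%N /\ valency r v = 2%N /\ valency r w = 2%N /\
        valency r y = 2%N /\ valency r z = 2%N /\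
        pnum r u v w = 1%N /\ pnum r w y z = 1%N /\
        #|cplx_prod r (conv r u) z| = 1%N)).
Proof.
move=> r_scheme r_qthin; split.
  move=> tr /(triple_count_gap_of_forbidden_config r_scheme).
  case=> [x [a [a' [b [l [j [m [xa ab count1 count0]]]]]]]].
  have := span_mul_closed_triple_count l j m (tr x).2 xa ab erefl.
  by rewrite count1 count0 => /eqP; rewrite oner_eq0.
move=> no_config x; apply: triple_counts_regular_span_algebra => //.
exact: triple_counts_regular_of_no_config.
Qed.
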